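(* Let $k=k(n)\ge 2$ be an integer with $k=o\!\left(\frac{n}{\log n}\right)$, and for a subspace $U\le\mathbb{F}_2^k$ define $$R_U=\sum_{I\subseteq[k]}(-1)^{k-|I|}N^{-\lambda\,(\dim U_I-k+|I|)}.$$ Then (1) if $U$ is robust, $R_U=\Theta\!\left(N^{-\lambda\dim U}\right)$ as $n\to\infty$; (2) if $U$ is not robust, $R_U=0$.
   Context: $\lambda\in(0,1)$ is fixed, $N=2^n$, and $n\to\infty$. For a subspace $U\le\mathbb{F}_2^k$ and $I\subseteq[k]$, $U_I=\{u_I:u\in U\}$ is the projection of $U$ onto the coordinates in $I$ (with $U_\emptyset$ of dimension $0$). Coordinate $i\in[k]$ is sensitive for $U$ if $\dim U_{[k]\setminus\{i\}}=\dim U-1$; $U$ is robust if it has no sensitive coordinate. *)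

From HB Require Import structures.
From mathcomp Require Import all_boot all_order all_algebra.
From Stdlib Require Import Reals.

Set Implicit Arguments.
Unset Strict Implicit.
Unset Printing Implicit Defensive.

(* A subspace U <= F_2^k is represented as the row space of a matrix
   U : 'M['F_2]_k (every subspace of F_2^k is the row space of some k x k
   matrix).  dim U = \rank U. *)

Section Subspaces.
Local Open Scope ring_scope.

(* The row space of [proj_mx I U] is isomorphic (via deleting the
   zero columns) to U_I = {u_I : u in U} <= F_2^I, so their dimensions agree. *)
Definition proj_mx (k : nat) (I : {set 'I_k}) (U : 'M['F_2]_k) : 'M['F_2]_k :=
  \matrix_(i < k, j < k) (if j \in I then U i j else 0).

Definition dimU (k : nat) (U : 'M['F_2]_k) : nat := \rank U.

Definition dim_proj (k : nat) (U : 'M['F_2]_k) (I : {set 'I_k}) : nat :=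
  \rank (proj_mx I U).

End Subspaces.

(* coordinate i is sensitive for U : dim U_{[k] \ {i}} = dim U - 1
   (stated without truncated subtraction, so the zero space is robust) *)
Definition sensitive (k : nat) (U : 'M['F_2]_k) (i : 'I_k) : Prop :=
  (dim_proj U [set~ i]).+1 = dimU U.

Definition robust (k : nat) (U : 'M['F_2]_k) : Prop :=
  forall i : 'I_k, ~ sensitive U i.

Local Open Scope R_scope.

Definition Nn (n : nat) : R := 2 ^ n.

(* R_U = sum_{I subset [k]} (-1)^{k-|I|} N^{-lambda (dim U_I + k - |I|)}
   (sign of (k - |I|) corrected) *)
Definition R_U (lam : R) (n k : nat) (U : 'M['F_2]_k) : R :=
  \big[Rplus/0]_(I : {set 'I_k})
     ((-1) ^ (subn k #|I|) *
      Rpower (Nn n) (- (lam * (INR (dim_proj U I) + INR k - INR #|I|)))).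

Definition little_o_n_over_log (k : nat -> nat) : Prop :=
  forall eps : R, 0 < eps ->
    exists n0 : nat, forall n : nat, (n0 <= n)%nat ->
      INR (k n) <= eps * (INR n / ln (INR n)).

(* I |-> dim U_I is monotone and submodular, so if coordinate i is
   sensitive, adding i to any index set raises dim U_I by exactly one;
   toggling i is then a sign-reversing involution on the terms of R_U, and
   they cancel.  If U is robust, then dim U_I + k - |I| >= dim U + 1 for every
   proper I, so every term except I = [k] is at most N^{-lam (dim U + 1)};
   there are fewer than 2^k of them, and 2^k N^{-lam} is at most 1/2 once
   k + 1 <= lam n, which k = o(n / log n) guarantees. *)
From HB Require Import structures.
From Pilot Require Import Defs.
From mathcomp Require Import all_boot all_order all_algebra.
From mathcomp Require Import zify.
From Stdlib Require Import Lia.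

Set Implicit Arguments.
Unset Strict Implicit.

Section ProjectionRank.
Local Open Scope ring_scope.
Import GRing.Theory.
Variables (k : nat) (U : 'M['F_2]_k).

(* mxalgebra reasons about row spaces, so we transpose: the restriction to
   the coordinates in A becomes a left multiplication by a diagonal 0/1
   matrix. *)
Let proj_tr (A : {set 'I_k}) : 'M['F_2]_k := (Defs.proj_mx A U)^T.
Let set_ind (A : {set 'I_k}) : 'rV['F_2]_k := \row_j (j \in A)%:R.

Let dim_projE A : dim_proj U A = \rank (proj_tr A).
Proof. by rewrite /proj_tr mxrank_tr. Qed.

Let diag_mul_proj_tr A B : diag_mx (set_ind A) *m proj_tr B = proj_tr (A :&: B).
Proof.
apply/matrixP => i j; rewrite mul_diag_mx !mxE in_setI.
by case: (i \in A); case: (i \in B); rewrite ?mul1r ?mul0r.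
Qed.

Let proj_trI_sub A B : (proj_tr (A :&: B) <= proj_tr B)%MS.
Proof. by rewrite -diag_mul_proj_tr submxMl. Qed.

Lemma dim_proj_mono (A B : {set 'I_k}) :
  A \subset B -> (dim_proj U A <= dim_proj U B)%N.
Proof. by move=> /setIidPl <-; rewrite !dim_projE mxrankS ?proj_trI_sub. Qed.

Lemma dim_projT : dim_proj U setT = dimU U.
Proof.
by rewrite /dimU; congr (\rank _); apply/matrixP => i j; rewrite !mxE in_setT.
Qed.

Lemma dim_proj_submod (A B : {set 'I_k}) :
  (dim_proj U (A :|: B) + dim_proj U (A :&: B) <= dim_proj U A + dim_proj U B)%N.
Proof.
rewrite !dim_projE -(mxrank_sum_cap (proj_tr A) (proj_tr B)).
rewrite leq_add //; apply: mxrankS.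
  have -> : proj_tr (A :|: B) = proj_tr A + proj_tr (B :\: A).
    apply/matrixP => i j; rewrite !mxE in_setU in_setD.
    by case: (i \in A); case: (i \in B); rewrite ?addr0 ?add0r.
  by apply: addmx_sub_adds; rewrite // -(setIidPl (subsetDl B A)) proj_trI_sub.
by rewrite sub_capmx proj_trI_sub setIC proj_trI_sub.
Qed.

Lemma dim_proj_subadd (A B : {set 'I_k}) :
  (dim_proj U (A :|: B) <= dim_proj U A + dim_proj U B)%N.
Proof. exact: leq_trans (leq_addr _ _) (dim_proj_submod A B). Qed.

Lemma dim_proj_set1 (j : 'I_k) : (dim_proj U [set j] <= 1)%N.
Proof.
have -> : [set j] = [set j] :&: setT by rewrite setIT.
rewrite dim_projE -diag_mul_proj_tr (_ : diag_mx _ = delta_mx j j).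
  exact: leq_trans (mxrankM_maxl _ _) (eq_leq (mxrank_delta _ _ _)).
apply/matrixP => a b; rewrite !mxE in_set1.
case: (a =P j) => [->|_]; case: (b =P j) => [->|nbj]; rewrite ?eqxx ?mul0rn //.
by rewrite eq_sym (introF eqP nbj).
Qed.

Lemma dim_proj_card (A : {set 'I_k}) : (dim_proj U A <= #|A|)%N.
Proof.
move hA: #|A| => m; elim: m A hA => [|m IH] A hA.
  move/eqP: hA; rewrite cards_eq0 => /eqP ->.
  rewrite dim_projE (_ : proj_tr set0 = 0) ?mxrank0 //.
  by apply/matrixP => a b; rewrite !mxE in_set0.
have [j jA] : exists j, j \in A by apply/card_gt0P; rewrite hA.
rewrite -(setD1K jA); apply: leq_trans (dim_proj_subadd _ _) _.
rewrite -add1n leq_add ?dim_proj_set1 // IH //.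
by move: (cardsD1 j A); rewrite jA hA => /eqP; rewrite eqSS => /eqP.
Qed.

Lemma dim_projU_le (A B : {set 'I_k}) :
  (dim_proj U (A :|: B) <= dim_proj U A + #|B :\: A|)%N.
Proof.
have -> : A :|: B = A :|: (B :\: A).
  by apply/setP => x; rewrite !inE; case: (x \in A).
apply: leq_trans (dim_proj_subadd _ _) _.
by rewrite leq_add2l dim_proj_card.
Qed.

Lemma sensitive_dim_projU1 (i : 'I_k) (J : {set 'I_k}) :
  sensitive U i -> i \notin J -> dim_proj U (i |: J) = (dim_proj U J).+1.
Proof.
move=> hi iJ.
have hsub := dim_proj_submod (i |: J) [set~ i].
have hT : (i |: J) :|: [set~ i] = setT.
  by apply/setP => x; rewrite !inE; case: (x == i); rewrite ?orbT.
have hI : (i |: J) :&: [set~ i] = J.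
  apply/setP => x; rewrite !inE.
  by case: (x =P i) => [->|_]; rewrite ?andbT ?(negbTE iJ).
rewrite hT hI dim_projT -hi in hsub.
have hle : (dim_proj U (i |: J) <= (dim_proj U J).+1)%N.
  rewrite setUC -addn1; apply: leq_trans (dim_projU_le _ _) _.
  by rewrite leq_add2l -(cards1 i) subset_leq_card ?subsetDl.
lia.
Qed.

Lemma not_robust_sensitive : ~ robust U -> exists i, sensitive U i.
Proof.
move=> hU; case: (pickP [pred i | (dim_proj U [set~ i]).+1 == dimU U]).
  by move=> i /eqP hi; exists i.
by move=> none; case: hU => i hi; have := none i; rewrite /= hi eqxx.
Qed.

Lemma robust_dim_proj_setC1 (j : 'I_k) :
  robust U -> dim_proj U [set~ j] = dimU U.
Proof.
move=> hU; have := hU j; rewrite /sensitive.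
have hle : (dim_proj U [set~ j] <= dimU U)%N.
  by rewrite -dim_projT dim_proj_mono ?subsetT.
have hge : (dimU U <= dim_proj U [set~ j] + 1)%N.
  have -> : dimU U = dim_proj U ([set~ j] :|: [set j]).
    by rewrite -dim_projT; congr dim_proj; apply/setP => x; rewrite !inE orNb.
  apply: leq_trans (dim_projU_le _ _) _.
  by rewrite leq_add2l -(cards1 j) subset_leq_card ?subsetDl.
lia.
Qed.

Lemma robust_dim_proj_gap (I : {set 'I_k}) :
  robust U -> I != setT -> (dimU U + #|I| < dim_proj U I + k)%N.
Proof.
move=> hU hI.
have /subsetPn [j _ jI] : ~~ (setT \subset I) by rewrite subTset.
have sIj : I \subset [set~ j].
  by apply/subsetP => x xI; rewrite !inE; apply: contraNneq jI => <-.
rewrite -(robust_dim_proj_setC1 j hU) -{1}(setUidPr sIj).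
have := dim_projU_le I [set~ j]; have := subset_leq_card sIj.
rewrite cardsD (setIidPr sIj) cardsC1 card_ord.
have := ltn_ord j; lia.
Qed.

End ProjectionRank.

From Stdlib Require Import Reals Lra.
Local Open Scope R_scope.

HB.instance Definition _ := Monoid.isComLaw.Build R 0 Rplus
  (fun x y z => esym (Rplus_assoc x y z)) Rplus_comm Rplus_0_l.

Lemma INR_leq (m p : nat) : (m <= p)%nat -> INR m <= INR p.
Proof. by move/leP; apply: le_INR. Qed.

Lemma INR_addn (m p : nat) : INR (m + p)%nat = INR m + INR p.
Proof. by rewrite -plusE plus_INR. Qed.

Lemma INR_expn (m p : nat) : INR (expn m p) = INR m ^ p.
Proof. by elim: p => // p IH; rewrite expnS -multE mult_INR IH. Qed.

Lemma big_Rplus_involution_opp (T : finType) (h : T -> T) (F : T -> R) :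
  involutive h -> (forall x, F (h x) = - F x) -> \big[Rplus/0]_x F x = 0.
Proof.
move=> hK hF.
have hopp : \big[Rplus/0]_x F (h x) = - \big[Rplus/0]_x F x.
  by apply: (big_ind2 (fun a b => a = - b)) => [|? ? ? ? -> ->|x _]; [lra|lra|].
have hre : \big[Rplus/0]_x F x = \big[Rplus/0]_x F (h x).
  exact: reindex_inj (inv_inj hK).
lra.
Qed.

Lemma Rabs_big_le_card (T : finType) (P : pred T) (F : T -> R) (b : R) :
  0 <= b -> (forall x, P x -> Rabs (F x) <= b) ->
  Rabs (\big[Rplus/0]_(x | P x) F x) <= INR #|T| * b.
Proof.
move=> hb hF; apply: Rle_trans (_ : _ <= INR (\sum_(x | P x) 1) * b) _.
  apply: (big_ind2 (fun a (c : nat) => Rabs a <= INR c * b)).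
  - by rewrite Rabs_R0 /=; lra.
  - move=> a1 m1 a2 m2 h1 h2; rewrite INR_addn.
    by have := Rabs_triang a1 a2; lra.
  - by move=> x Px; rewrite /=; have := hF x Px; lra.
apply: Rmult_le_compat_r => //; apply: INR_leq.
by rewrite sum1dep_card max_card.
Qed.

Definition R_U_term (lam : R) (n k : nat) (U : 'M['F_2]_k) (I : {set 'I_k}) : R :=
  (-1) ^ (subn k #|I|) *
  Rpower (Nn n) (- (lam * (INR (dim_proj U I) + INR k - INR #|I|))).
Arguments R_U_term lam n {k} U I.

Lemma R_UE (lam : R) (n k : nat) (U : 'M['F_2]_k) :
  R_U lam n U = \big[Rplus/0]_I R_U_term lam n U I.
Proof. by []. Qed.

Lemma R_U_term_setU1 (lam : R) (n k : nat) (U : 'M['F_2]_k)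
    (i : 'I_k) (J : {set 'I_k}) :
  i \notin J -> dim_proj U (i |: J) = (dim_proj U J).+1 ->
  R_U_term lam n U (i |: J) = - R_U_term lam n U J.
Proof.
move=> iJ hdim; have hcard : #|i |: J| = (#|J|).+1 by rewrite cardsU1 iJ.
have hk : (#|J|.+1 <= k)%nat.
  by rewrite -hcard; apply: leq_trans (max_card _) (eq_leq (card_ord k)).
rewrite /R_U_term hdim hcard (_ : subn k #|J| = (subn k #|J|.+1).+1); last by lia.
rewrite -tech_pow_Rmult !S_INR.
by replace (INR (dim_proj U J) + 1 + INR k - (INR #|J| + 1))
  with (INR (dim_proj U J) + INR k - INR #|J|) by ring; ring.
Qed.

Lemma R_U_sensitive (lam : R) (n k : nat) (U : 'M['F_2]_k) i :
  sensitive U i -> R_U lam n U = 0.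
Proof.
move=> hi; rewrite R_UE.
pose toggle (I : {set 'I_k}) := if i \in I then I :\ i else i |: I.
apply: (@big_Rplus_involution_opp _ toggle) => I; rewrite /toggle.
  by case iI: (i \in I); rewrite ?setD11 ?setD1K ?setU11 ?setU1K ?iI.
case: ifP => iI; last by rewrite R_U_term_setU1 ?iI ?sensitive_dim_projU1 ?iI.
rewrite -{2}(setD1K iI) R_U_term_setU1 ?setD11 ?sensitive_dim_projU1 ?setD11 //.
by rewrite Ropp_involutive.
Qed.

Lemma Rpower_Nn (n : nat) (x : R) : Rpower (Nn n) x = Rpower 2 (INR n * x).
Proof. by rewrite /Nn -Rpower_pow ?Rpower_mult //; lra. Qed.

Lemma Nn_ge1 (n : nat) : 1 <= Nn n.
Proof. by apply: pow_R1_Rle; lra. Qed.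

Lemma R_U_term_setT (lam : R) (n k : nat) (U : 'M['F_2]_k) :
  R_U_term lam n U setT = Rpower (Nn n) (- (lam * INR (dimU U))).
Proof.
rewrite /R_U_term cardsT card_ord subnn dim_projT /= Rmult_1_l.
by congr Rpower; ring.
Qed.

Lemma R_U_term_robust_le (lam : R) (n k : nat) (U : 'M['F_2]_k) (I : {set 'I_k}) :
  0 <= lam -> robust U -> I != setT ->
  Rabs (R_U_term lam n U I) <=
  Rpower (Nn n) (- (lam * INR (dimU U))) * Rpower (Nn n) (- lam).
Proof.
move=> hlam hU hI.
have /INR_leq gap := robust_dim_proj_gap hU hI; rewrite S_INR !INR_addn in gap.
rewrite /R_U_term Rabs_mult pow_1_abs Rmult_1_l Rabs_pos_eq; last first.
  by apply: Rlt_le; apply: exp_pos.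
by rewrite -Rpower_plus; apply: Rle_Rpower; [exact: Nn_ge1 | nra].
Qed.

Lemma pow2_Rpower_le_half (lam : R) (n k : nat) :
  INR k.+1 <= lam * INR n -> 2 ^ k * Rpower (Nn n) (- lam) <= / 2.
Proof.
rewrite S_INR => hk.
rewrite Rpower_Nn -Rpower_pow; last lra.
have -> : / 2 = Rpower 2 (- 1) by rewrite Rpower_Ropp Rpower_1 //; lra.
by rewrite -Rpower_plus; apply: Rle_Rpower; lra.
Qed.

Lemma R_U_robust_bounds (lam : R) (n k : nat) (U : 'M['F_2]_k) :
  0 <= lam -> robust U -> INR k.+1 <= lam * INR n ->
  / 2 * Rpower (Nn n) (- (lam * INR (dimU U))) <= R_U lam n U <=
  3 / 2 * Rpower (Nn n) (- (lam * INR (dimU U))).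
Proof.
move=> hlam hU hk.
set P := Rpower (Nn n) _; set q := Rpower (Nn n) (- lam).
have hP : 0 < P by apply: exp_pos.
have hq : 0 < q by apply: exp_pos.
have hcard : INR #|{set 'I_k}| = 2 ^ k.
  rewrite -cardsT -powersetT card_powerset cardsT card_ord INR_expn.
  by congr (_ ^ _); rewrite /=; lra.
have hrest : Rabs (\big[Rplus/0]_(I | I != setT) R_U_term lam n U I) <=
             INR #|{set 'I_k}| * (P * q).
  apply: Rabs_big_le_card => [|I hI]; first nra.
  exact: R_U_term_robust_le.
have hsmall : INR #|{set 'I_k}| * (P * q) <= P / 2.
  rewrite hcard; have := pow2_Rpower_le_half hk; rewrite -/q; nra.
rewrite R_UE (bigD1 setT) //= R_U_term_setT -/P.
move: hrest; set rest := \big[Rplus/0]_(I | _) _ => hrest.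
have := Rle_abs rest; have := Rle_abs (- rest); rewrite Rabs_Ropp; lra.
Qed.

Lemma little_o_n_over_log_linear (k : nat -> nat) (c : R) :
  0 < c -> little_o_n_over_log k ->
  exists n0 : nat, forall n : nat, (n0 <= n)%nat -> INR (k n).+1 <= c * INR n.
Proof.
move=> hc hk.
have [n1 hn1] := hk (c / 2) ltac:(lra).
have [m hm] := INR_unbounded (2 / c).
exists (n1 + m + 4)%nat => n hn.
have hkn := hn1 n ltac:(lia).
have hm_n : INR m <= INR n by apply: INR_leq; lia.
have h4 : 4 <= INR n.
  by have := @INR_leq 4 n ltac:(lia); rewrite /=; lra.
have hln : 1 < ln (INR n).
  rewrite -(ln_exp 1); apply: ln_increasing; [exact: exp_pos | have := exp_le_3; lra].
have hdiv : INR n / ln (INR n) <= INR n.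
  apply: (Rmult_le_reg_r (ln (INR n))); first lra.
  rewrite /Rdiv Rmult_assoc Rinv_l; nra.
have hcn : 2 <= c * INR n.
  have e : c * (2 / c) = 2 by field; lra.
  nra.
rewrite S_INR; nra.
Qed.

Theorem mainTheorem6 :
  forall (lam : R), 0 < lam < 1 ->
  forall (k : nat -> nat),
    (forall n : nat, (2 <= k n)%nat) ->
    little_o_n_over_log k ->
    (forall U : forall n : nat, 'M['F_2]_(k n),
       (forall n : nat, robust (U n)) ->
       exists c C : R, 0 < c /\ 0 < C /\
         exists n0 : nat, forall n : nat, (n0 <= n)%nat ->
           c * Rpower (Nn n) (- (lam * INR (dimU (U n)))) <= R_U lam n (U n) /\
           R_U lam n (U n) <= C * Rpower (Nn n) (- (lam * INR (dimU (U n)))))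
    /\
    (forall (n : nat) (U : 'M['F_2]_(k n)), ~ robust U -> R_U lam n U = 0).
Proof.
move=> lam hlam k _ hk; split.
  move=> U hU; exists (/ 2), (3 / 2); split; [lra | split; [lra |]].
  have [n0 hn0] := little_o_n_over_log_linear (proj1 hlam) hk.
  exists n0 => n hn; apply: R_U_robust_bounds; [lra | exact: hU | exact: hn0].
move=> n U hU; have [i hi] := not_robust_sensitive hU.
exact: R_U_sensitive hi.
Qed.
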